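(* Let $A_i\in\mathbb R^{d\times d}$, $i\in\mathbb N$, be matrices such that $\|A_i\|\le A^*<\infty$ for all $i$, $\sup_{i\in\mathbb N}\rho(A_i)=\rho_0<1$, and for some $p\ge1$ $$\|A\|_{p\text{-var}}=\Big(\sup_{1\le i_1<i_2<\cdots}\sum_{k=1}^\infty\|A_{i_{k+1}}-A_{i_k}\|^p\Big)^{1/p}\le A^*.$$ Then for every $\rho>\rho_0$ there exists $K=K(\rho,\rho_0,A^* )$ such that $\big\|\prod_{i=s+1}^tA_i\big\|\le K\rho^{t-s}$ for all integers $0\le s<t$.
   Context: $\|\cdot\|$ denotes the Euclidean operator norm and $\rho(A)$ the spectral radius (maximal modulus of the complex eigenvalues) of a matrix $A$. *)

From HB Require Import structures.
From mathcomp Require Import all_boot all_order all_algebra.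
From mathcomp Require Import all_classical all_reals.
From mathcomp Require Import ereal topology normedtype sequences exp.
From mathcomp Require Import complex.
Set Implicit Arguments.
Unset Strict Implicit.
Unset Printing Implicit Defensive.
Import Order.TTheory GRing.Theory Num.Theory.
Local Open Scope ring_scope.
Local Open Scope classical_set_scope.
Local Open Scope ereal_scope.
Local Open Scope ring_scope.

Definition vnorm (R : realType) (d : nat) (x : 'cV[R]_d) : R :=
  Num.sqrt (\sum_(i < d) x i 0 ^+ 2).

Definition opnorm (R : realType) (d : nat) (A : 'M[R]_d) : R :=
  sup [set vnorm (A *m x) | x in [set x : 'cV[R]_d | vnorm x <= 1]].

Definition cplx_mx (R : realType) (d : nat) (A : 'M[R]_d) : 'M[complex.complex R]_d :=
  map_mx (fun a : R => complex.Complex a 0) A.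

(* spectral radius: max modulus of the complex eigenvalues
   (written as the sup of the finite set of moduli; sup set0 = 0) *)
Definition spectral_radius (R : realType) (d : nat) (A : 'M[R]_d) : R :=
  sup [set complex.ComplexField.Normc.normc l
      | l in [set l : complex.complex R | eigenvalue (cplx_mx A) l]].

Definition pvar_norm (R : realType) (d : nat) (p : R) (A : nat -> 'M[R]_d)
    : \bar R :=
  poweR
   (ereal_sup [set (\sum_(0 <= k <oo) ((powR (opnorm (A (n k.+1) - A (n k))) p)%:E))%E
              | n in [set n : nat -> nat | (1 <= n 0)%N /\ forall k, (n k < n k.+1)%N]])
   p^-1.

(* All estimates use the entrywise l1 norm, which is submultiplicative and
   equivalent to the operator norm up to the factor d^2.
   By Cayley-Hamilton over the complex numbers, a matrix B with spectral radius
   at most r0 and bounded norm satisfies ||B^k|| <= G r1^k for any r1 > r0, with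
   G depending only on the bounds; choose a block length m with G r1^m <= rho^m/2.
   If all increments A_(k+1) - A_k along a block of length m are below a small
   delta, the product over the block is within rho^m/2 of A_(s+1)^m, so its norm
   is at most rho^m.  The p-variation bound allows only boundedly many
   increments above delta, so all but boundedly many blocks of a product
   contract by rho^m, and each remaining block costs at most a factor (a/rho)^m,
   where a bounds the norms of the A_i. *)

From HB Require Import structures.
From mathcomp Require Import all_boot all_order all_algebra.
From mathcomp Require Import all_classical all_reals.
From mathcomp Require Import ereal topology normedtype sequences exp.
From mathcomp Require Import complex.
From mathcomp Require Import ring lra.
Import Order.TTheory GRing.Theory Num.Theory numFieldNormedType.Exports.
Set Implicit Arguments.
Unset Strict Implicit.
Unset Printing Implicit Defensive.
Local Open Scope ring_scope.
Local Open Scope classical_set_scope.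

Section EntrywiseNorm.
Variable T : numDomainType.

Definition l1norm m n (M : 'M[T]_(m, n)) : T := \sum_i \sum_j `|M i j|.

Lemma l1norm_ge0 m n (M : 'M[T]_(m, n)) : 0 <= l1norm M.
Proof. by apply: sumr_ge0 => i _; apply: sumr_ge0. Qed.

Lemma l1norm0 m n : l1norm (0 : 'M[T]_(m, n)) = 0.
Proof. by rewrite /l1norm big1 // => i _; rewrite big1 // => j _; rewrite mxE normr0. Qed.

Lemma normr_entry_le_l1norm m n (M : 'M[T]_(m, n)) i j : `|M i j| <= l1norm M.
Proof.
rewrite /l1norm (bigD1 i) //= (bigD1 j) //= -addrA lerDl.
by apply: addr_ge0; apply: sumr_ge0 => *; [|apply: sumr_ge0].
Qed.

Lemma l1norm_gt0 m n (M : 'M[T]_(m, n)) : M != 0 -> 0 < l1norm M.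
Proof.
move=> M_neq0; rewrite lt_def l1norm_ge0 andbT; apply: contra M_neq0 => /eqP M0.
apply/eqP/matrixP => i j; apply/eqP; rewrite mxE -normr_le0 -M0.
exact: normr_entry_le_l1norm.
Qed.

Lemma l1normD m n (M N : 'M[T]_(m, n)) : l1norm (M + N) <= l1norm M + l1norm N.
Proof.
rewrite /l1norm -big_split; apply: ler_sum => i _; rewrite -big_split.
by apply: ler_sum => j _; rewrite mxE ler_normD.
Qed.

Lemma l1normB m n (M N : 'M[T]_(m, n)) : l1norm (M - N) <= l1norm M + l1norm N.
Proof.
rewrite /l1norm -big_split; apply: ler_sum => i _; rewrite -big_split.
by apply: ler_sum => j _; rewrite !mxE ler_normB.
Qed.

Lemma l1norm_sum m n I (r : seq I) (P : pred I) (F : I -> 'M[T]_(m, n)) :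
  l1norm (\sum_(i <- r | P i) F i) <= \sum_(i <- r | P i) l1norm (F i).
Proof.
elim/big_rec2: _ => [|i y M _ IH]; first by rewrite l1norm0.
by apply: le_trans (l1normD _ _) _; rewrite lerD2l.
Qed.

Lemma l1normZ m n a (M : 'M[T]_(m, n)) : l1norm (a *: M) = `|a| * l1norm M.
Proof.
rewrite /l1norm big_distrr; apply: eq_bigr => i _; rewrite big_distrr.
by apply: eq_bigr => j _; rewrite mxE normrM.
Qed.

Lemma l1normM m n p (M : 'M[T]_(m, n)) (N : 'M[T]_(n, p)) :
  l1norm (M *m N) <= l1norm M * l1norm N.
Proof.
pose col_norm k := \sum_j `|N j k|.
have -> : l1norm N = \sum_k col_norm k by rewrite /l1norm exchange_big.
rewrite /l1norm mulr_suml; apply: ler_sum => i _.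
rewrite mulr_suml; under [leRHS]eq_bigr do rewrite mulr_sumr.
rewrite [leRHS]exchange_big; apply: ler_sum => k _.
rewrite mxE; apply: le_trans (ler_norm_sum _ _ _) _.
apply: ler_sum => j _; rewrite normrM ler_wpM2l //.
by rewrite /col_norm (bigD1 j) //= lerDl sumr_ge0.
Qed.

Lemma l1norm_scalar n (a : T) : l1norm (a%:M : 'M[T]_n) = `|a| * n%:R.
Proof.
rewrite /l1norm -[n in n%:R]card_ord -sumr_const mulr_sumr; apply: eq_bigr => i _.
rewrite (bigD1 i) //= big1 ?addr0 ?mxE ?eqxx ?mulr1n ?mulr1 //.
by move=> j /negbTE ji; rewrite mxE eq_sym ji mulr0n normr0.
Qed.

End EntrywiseNorm.

Lemma eigenvalue_norm_le_l1norm (F : numFieldType) n (A : 'M[F]_n) l :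
  eigenvalue A l -> `|l| <= l1norm A.
Proof.
case/eigenvalueP => v vA v_neq0; have := l1normM v A.
by rewrite vA l1normZ mulrC ler_pM2l // l1norm_gt0.
Qed.

(* [0 <= b] covers [S = set0], whose [sup] is [0]. *)
Lemma sup_le_ub (R : realType) (S : set R) b : ubound S b -> 0 <= b -> sup S <= b.
Proof.
move=> Sb b_ge0; have [->|/set0P S_neq0] := eqVneq S set0; first by rewrite sup0.
exact: ge_sup.
Qed.

Section OperatorNorm.
Variables (R : realType) (d : nat).
Implicit Types (A : 'M[R]_d) (x : 'cV[R]_d).

Lemma vnorm_le_l1norm x : vnorm x <= l1norm x.
Proof.
have -> : l1norm x = \sum_i `|x i 0| by apply: eq_bigr => i _; rewrite big_ord1.
rewrite /vnorm -(ger0_norm (sumr_ge0 _ (fun i _ => normr_ge0 (x i 0)))) -sqrtr_sqr.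
rewrite ler_sqrt ?sqr_ge0 // expr2 mulr_suml; apply: ler_sum => i _.
rewrite -[x i 0 ^+ 2]real_normK ?num_real // expr2 ler_wpM2l //.
by rewrite (bigD1 i) //= lerDl sumr_ge0.
Qed.

Lemma normr_entry_le_vnorm x i : `|x i 0| <= vnorm x.
Proof.
rewrite -sqrtr_sqr ler_sqrt ?sumr_ge0 // => [|j _]; last exact: sqr_ge0.
by rewrite (bigD1 i) //= lerDl sumr_ge0 // => j _; rewrite sqr_ge0.
Qed.

Lemma vnorm_mul_le_l1norm A x : vnorm x <= 1 -> vnorm (A *m x) <= l1norm A.
Proof.
move=> x_le1; apply: le_trans (vnorm_le_l1norm _) _; apply: ler_sum => i _.
rewrite big_ord1 mxE; apply: le_trans (ler_norm_sum _ _ _) _; apply: ler_sum => j _.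
rewrite normrM -[leRHS]mulr1 ler_wpM2l //.
exact: le_trans (normr_entry_le_vnorm x j) x_le1.
Qed.

Lemma opnorm_le_l1norm A : opnorm A <= l1norm A.
Proof.
apply: sup_le_ub (l1norm_ge0 A) => _ [x /= x_le1 <-].
exact: vnorm_mul_le_l1norm.
Qed.

Lemma vnorm_mul_le_opnorm A x : vnorm x <= 1 -> vnorm (A *m x) <= opnorm A.
Proof.
move=> x_le1; apply: ub_le_sup; last by exists x.
by exists (l1norm A) => _ [y /= y_le1 <-]; exact: vnorm_mul_le_l1norm.
Qed.

Lemma opnorm_ge0 A : 0 <= opnorm A.
Proof.
have vnorm0 : vnorm (0 : 'cV[R]_d) = 0.
  by rewrite /vnorm big1 ?sqrtr0 // => i _; rewrite mxE expr0n.
by rewrite -vnorm0 -(mulmx0 _ A) vnorm_mul_le_opnorm // vnorm0.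
Qed.

Lemma normr_entry_le_opnorm A i j : `|A i j| <= opnorm A.
Proof.
have vnorm_delta : vnorm (delta_mx j 0 : 'cV[R]_d) = 1.
  rewrite /vnorm (bigD1 j) //= big1 ?addr0 ?mxE ?eqxx ?expr1n ?sqrtr1 //.
  by move=> k /negbTE kj; rewrite mxE kj expr0n.
have := @vnorm_mul_le_opnorm A (delta_mx j 0); rewrite vnorm_delta -colE => /(_ (lexx 1)).
by apply: le_trans; have := normr_entry_le_vnorm (col j A) i; rewrite mxE.
Qed.

Lemma l1norm_le_opnorm A : l1norm A <= (d * d)%:R * opnorm A.
Proof.
have -> : ((d * d)%:R : R) = \sum_(i < d) \sum_(j < d) 1.
  by rewrite !sumr_const !card_ord -mulrnA.
rewrite mulr_suml; apply: ler_sum => i _; rewrite mulr_suml.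
by apply: ler_sum => j _; rewrite mul1r normr_entry_le_opnorm.
Qed.

End OperatorNorm.

Section SpectralRadius.
Variables (R : realType) (d : nat).
Local Notation normc := (@complex.ComplexField.Normc.normc R).

Lemma normC_normc (z : complex R) : `|z| = (normc z)%:C%C.
Proof. by []. Qed.

Lemma l1norm_cplx_mx n (A : 'M[R]_n) : l1norm (cplx_mx A) = (l1norm A)%:C%C.
Proof.
rewrite /l1norm rmorph_sum; apply: eq_bigr => i _; rewrite rmorph_sum.
by apply: eq_bigr => j _; rewrite mxE normC_normc /= expr0n addr0 sqrtr_sqr.
Qed.

Lemma normc_eigenvalue_le_l1norm (A : 'M[R]_d) l :
  eigenvalue (cplx_mx A) l -> normc l <= l1norm A.
Proof.
by move=> /eigenvalue_norm_le_l1norm; rewrite l1norm_cplx_mx normC_normc complex.lecR.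
Qed.

Lemma spectral_radius_le_l1norm (A : 'M[R]_d) : spectral_radius A <= l1norm A.
Proof.
apply: sup_le_ub (l1norm_ge0 A) => _ [l /= A_l <-].
exact: normc_eigenvalue_le_l1norm.
Qed.

Lemma normc_eigenvalue_le_spectral_radius (A : 'M[R]_d) l :
  eigenvalue (cplx_mx A) l -> normc l <= spectral_radius A.
Proof.
move=> A_l; apply: ub_le_sup; last by exists l.
by exists (l1norm A) => _ [l' /= A_l' <-]; exact: normc_eigenvalue_le_l1norm.
Qed.

Lemma spectral_radius_ge0 (A : 'M[R]_d) : 0 <= spectral_radius A.
Proof.
rewrite /spectral_radius; set S := [set _ | _ in _].
have [->|/set0P [_ [l A_l _]]] := eqVneq S set0; first by rewrite sup0.
apply: le_trans (normc_eigenvalue_le_spectral_radius A_l).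
by rewrite -complex.ler0c -normC_normc.
Qed.

Lemma spectral_radius_le_sup (A : nat -> 'M[R]_d) (I : set nat) b i :
  (forall j, I j -> opnorm (A j) <= b) -> I i ->
  spectral_radius (A i) <= sup [set spectral_radius (A j) | j in I].
Proof.
move=> A_le_b Ii; apply: ub_le_sup; last by exists i.
exists ((d * d)%:R * b) => _ [j /= Ij <-].
apply: le_trans (spectral_radius_le_l1norm _) _.
by apply: le_trans (l1norm_le_opnorm _) _; rewrite ler_wpM2l ?A_le_b.
Qed.

End SpectralRadius.

Fixpoint pow_coef (F : numFieldType) (r0 r1 b : F) k : F :=
  if k is k.+1 then 1 + b * pow_coef r0 r1 b k / (r1 - r0) else 0.

Lemma rmorph_pow_coef (F K : numFieldType) (f : {rmorphism F -> K}) r0 r1 b k :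
  f (pow_coef r0 r1 b k) = pow_coef (f r0) (f r1) (f b) k.
Proof.
elim: k => [|k IH] /=; first exact: rmorph0.
by rewrite rmorphD rmorph1 fmorph_div rmorphM rmorphB IH.
Qed.

Section PowerBound.
Variables (F : numFieldType) (r0 r1 b : F).
Hypotheses (r0_ge0 : 0 <= r0) (r01 : r0 < r1) (b_ge0 : 0 <= b).
Local Notation c := (pow_coef r0 r1 b).

Lemma pow_coef_ge0 k : 0 <= c k.
Proof.
elim: k => [|k IH] //=; apply: addr_ge0 => //.
by rewrite divr_ge0 ?mulr_ge0 // subr_ge0 ltW.
Qed.

Lemma pow_coef_ge1 k : 1 <= c k.+1.
Proof. by rewrite /= lerDl divr_ge0 ?mulr_ge0 ?pow_coef_ge0 // subr_ge0 ltW. Qed.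

Lemma pow_coef_step k : b * c k + r0 * c k.+1 <= c k.+1 * r1.
Proof.
rewrite -subr_ge0.
have -> : c k.+1 * r1 - (b * c k + r0 * c k.+1) = r1 - r0.
  by rewrite /=; field; rewrite subr_eq0 gt_eqF.
by rewrite subr_ge0 ltW.
Qed.

(* Q B^(k+1) = Q (B - z) B^k + z Q B^k: the first term is handled by induction
   on the annihilating factors, the second by induction on k. *)
Lemma l1norm_mul_expr_le n (B : 'M[F]_n.+1) (zs : seq F) :
  (forall z, z \in zs -> `|z| <= r0 /\ l1norm (B - z%:M) <= b) ->
  forall Q, Q * \prod_(z <- zs) (B - z%:M) = 0 ->
  forall k, l1norm (Q * B ^+ k) <= l1norm Q * c (size zs) * r1 ^+ k.
Proof.
have r1k_ge0 k : 0 <= r1 ^+ k by rewrite exprn_ge0 // (le_trans r0_ge0) ?ltW.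
elim: zs => [|z zs IHzs] zs_bound Q.
  by rewrite big_nil mulr1 => -> k; rewrite !mul0r l1norm0 !mul0r.
rewrite big_cons mulrA => QBz_zs; set Q' := Q * (B - z%:M) in QBz_zs.
have [z_le B_z_le] := zs_bound z (mem_head _ _).
have IHQ' : forall k, l1norm (Q' * B ^+ k) <= l1norm Q' * c (size zs) * r1 ^+ k.
  by apply: IHzs QBz_zs => y y_zs; apply: zs_bound; rewrite in_cons y_zs orbT.
have Q'_le : l1norm Q' <= l1norm Q * b.
  by rewrite (le_trans (l1normM _ _)) ?ler_wpM2l ?l1norm_ge0.
elim=> [|k IHk]; first by rewrite expr0 !mulr1 ler_peMr ?l1norm_ge0 ?pow_coef_ge1.
have -> : Q * B ^+ k.+1 = Q' * B ^+ k + z *: (Q * B ^+ k).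
  rewrite /Q' exprS mulrBr mulrBl !mulrA.
  have -> : Q * z%:M = z *: Q by rewrite -mul_mx_scalar.
  by rewrite -scalerAl subrK.
apply: le_trans (l1normD _ _) _; rewrite l1normZ.
apply: le_trans (lerD (IHQ' k) (ler_wpM2l (normr_ge0 z) IHk)) _.
apply: le_trans (lerD (ler_wpM2r (r1k_ge0 k) (ler_wpM2r (pow_coef_ge0 _) Q'_le))
                      (ler_wpM2r _ z_le)) _.
  by rewrite !mulr_ge0 ?l1norm_ge0 ?pow_coef_ge0.
rewrite [size _]/= exprS.
have -> : l1norm Q * b * c (size zs) * r1 ^+ k + r0 * (l1norm Q * c (size zs).+1 * r1 ^+ k)
    = l1norm Q * r1 ^+ k * (b * c (size zs) + r0 * c (size zs).+1) by ring.
have -> : l1norm Q * c (size zs).+1 * (r1 * r1 ^+ k)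
    = l1norm Q * r1 ^+ k * (c (size zs).+1 * r1) by ring.
by rewrite ler_wpM2l ?mulr_ge0 ?l1norm_ge0 ?pow_coef_step.
Qed.

End PowerBound.

Lemma l1norm_expr_le_eigenvalue (C : numClosedFieldType) n (B : 'M[C]_n.+1) (a r0 r1 : C) :
  0 <= r0 -> r0 < r1 -> l1norm B <= a -> (forall l, eigenvalue B l -> `|l| <= r0) ->
  forall k, l1norm (B ^+ k) <= n.+1%:R * pow_coef r0 r1 (a + r0 * n.+1%:R) n.+1 * r1 ^+ k.
Proof.
move=> r0_ge0 r01 B_le B_eig k.
have [zs char_polyE] := closed_field_poly_normal (char_poly B).
rewrite (monicP (char_poly_monic B)) scale1r in char_polyE.
have size_zs : size zs = n.+1.
  by have := size_char_poly B; rewrite char_polyE size_prod_XsubC => -[].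
have zs_bound z : z \in zs -> `|z| <= r0 /\ l1norm (B - z%:M) <= a + r0 * n.+1%:R.
  move=> z_zs; have /B_eig z_le : eigenvalue B z.
    by rewrite eigenvalue_root_char char_polyE root_prod_XsubC.
  split=> //; apply: le_trans (l1normB _ _) _.
  by rewrite l1norm_scalar lerD // ler_wpM2r.
have annihilated : 1 * \prod_(z <- zs) (B - z%:M) = 0.
  rewrite mul1r -(Cayley_Hamilton B) char_polyE rmorph_prod /=.
  by apply: eq_bigr => z _; rewrite rmorphB /= horner_mx_X horner_mx_C.
have a_ge0 : 0 <= a by apply: le_trans (l1norm_ge0 B) B_le.
have := l1norm_mul_expr_le r0_ge0 r01 _ zs_bound annihilated k.
by rewrite mul1r l1norm_scalar normr1 mul1r size_zs; apply; rewrite addr_ge0 ?mulr_ge0.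
Qed.

Lemma l1norm_expr_le_spectral_radius (R : realType) d (B : 'M[R]_d) (a r0 r1 : R) :
  0 <= r0 -> r0 < r1 -> l1norm B <= a -> spectral_radius B <= r0 ->
  forall k, l1norm (B ^+ k) <= d%:R * pow_coef r0 r1 (a + r0 * d%:R) d * r1 ^+ k.
Proof.
case: d B => [|n] B r0_ge0 r01 B_le B_sr k; first by rewrite /l1norm big_ord0 !mul0r.
rewrite -complex.lecR -l1norm_cplx_mx.
rewrite (_ : cplx_mx _ = map_mx (complex.real_complex R) B ^+ k); last first.
  exact: (rmorphXn (map_mx (complex.real_complex R))).
rewrite !rmorphM rmorph_nat rmorphXn rmorph_pow_coef rmorphD rmorphM rmorph_nat.
apply: l1norm_expr_le_eigenvalue; rewrite ?complex.lecR ?complex.ltcR //.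
  by rewrite (l1norm_cplx_mx B) complex.lecR.
move=> l /normc_eigenvalue_le_spectral_radius l_le.
by rewrite normC_normc complex.lecR (le_trans l_le).
Qed.

Section ProductBounds.
Variables (R : numDomainType) (n : nat).

Lemma l1norm_mul_prod_le (I : eqType) (r : seq I) (F : I -> 'M[R]_n) (M : 'M[R]_n) a :
  (forall i, i \in r -> l1norm (F i) <= a) ->
  l1norm (M * \prod_(i <- r) F i) <= l1norm M * a ^+ size r.
Proof.
elim: r M => [|x r IH] M F_le; first by rewrite big_nil mulr1 expr0 mulr1.
rewrite big_cons mulrA exprS /=; apply: le_trans (IH _ _) _.
  by move=> i r_i; rewrite F_le // in_cons r_i orbT.
have a_ge0 : 0 <= a by apply: le_trans (l1norm_ge0 _) (F_le x (mem_head _ _)).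
rewrite mulrA ler_wpM2r ?exprn_ge0 // (le_trans (l1normM _ _)) //.
by rewrite ler_wpM2l ?l1norm_ge0 ?F_le ?mem_head.
Qed.

Lemma l1norm_prod_le (I : eqType) (r : seq I) (F : I -> 'M[R]_n) a :
  (forall i, i \in r -> l1norm (F i) <= a) ->
  l1norm (\prod_(i <- r) F i) <= n%:R * a ^+ size r.
Proof.
by move=> /(l1norm_mul_prod_le 1); rewrite mul1r l1norm_scalar normr1 mul1r.
Qed.

Lemma l1norm_nonempty_prod_le (I : eqType) (r : seq I) (F : I -> 'M[R]_n) a :
  r != [::] -> (forall i, i \in r -> l1norm (F i) <= a) ->
  l1norm (\prod_(i <- r) F i) <= a ^+ size r.
Proof.
case: r => [//|x r] _ F_le; rewrite big_cons exprS.
apply: le_trans (l1norm_mul_prod_le (F x) (a := a) _) _.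
  by move=> i r_i; rewrite F_le // in_cons r_i orbT.
have a_ge0 : 0 <= a by apply: le_trans (l1norm_ge0 _) (F_le x (mem_head _ _)).
by rewrite ler_wpM2r ?exprn_ge0 ?F_le ?mem_head.
Qed.

Lemma l1norm_prod_sub_le (I : eqType) (r : seq I) (F G : I -> 'M[R]_n) a e : 1 <= a ->
  (forall i, i \in r -> [/\ l1norm (F i) <= a, l1norm (G i) <= a & l1norm (F i - G i) <= e]) ->
  l1norm (\prod_(i <- r) F i - \prod_(i <- r) G i) <= (size r)%:R * n%:R * a ^+ size r * e.
Proof.
move=> a_ge1; have a_ge0 : 0 <= a := le_trans ler01 a_ge1.
elim: r => [|x r IH] FG_le; first by rewrite !big_nil subrr l1norm0 !mul0r.
have [Fx_le _ FGx_le] := FG_le x (mem_head _ _).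
have r_sub : {subset r <= x :: r} by move=> i r_i; rewrite in_cons r_i orbT.
have {}IH := IH (fun i r_i => FG_le i (r_sub i r_i)).
have e_ge0 : 0 <= e := le_trans (l1norm_ge0 _) FGx_le.
have G_le : l1norm (\prod_(i <- r) G i) <= n%:R * a ^+ size r.
  by apply: l1norm_prod_le => i r_i; have [] := FG_le i (r_sub i r_i).
rewrite !big_cons.
have -> : F x * \prod_(i <- r) F i - G x * \prod_(i <- r) G i
    = F x * (\prod_(i <- r) F i - \prod_(i <- r) G i) + (F x - G x) * \prod_(i <- r) G i.
  by rewrite mulrBr mulrBl addrA subrK.
apply: le_trans (l1normD _ _) _; apply: le_trans (lerD (l1normM _ _) (l1normM _ _)) _.
apply: le_trans (lerD (ler_pM (l1norm_ge0 _) (l1norm_ge0 _) Fx_le IH)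
                      (ler_pM (l1norm_ge0 _) (l1norm_ge0 _) FGx_le G_le)) _.
rewrite (_ : size (x :: r) = (size r).+1) // -natr1 exprS.
have -> : ((size r)%:R + 1) * n%:R * (a * a ^+ size r) * e
    = a * ((size r)%:R * n%:R * a ^+ size r * e) + e * (n%:R * a ^+ size r) * a by ring.
by rewrite lerD2l ler_peMr // !mulr_ge0 ?exprn_ge0.
Qed.

End ProductBounds.

Section Jumps.
Variable jump : pred nat.

Definition njumps s t := (\sum_(s <= k < t) jump k)%N.

Lemma njumps_cat s t u : (s <= t <= u)%N -> njumps s u = (njumps s t + njumps t u)%N.
Proof. by case/andP=> st tu; rewrite /njumps (big_cat_nat st tu). Qed.

Lemma njumps_eq0 s t k : njumps s t = 0%N -> (s <= k < t)%N -> ~~ jump k.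
Proof.
move=> /eqP; rewrite /njumps sum_nat_seq_eq0 => /allP/(_ k).
by rewrite mem_index_iota => /[apply]; case: (jump k).
Qed.

End Jumps.

Section GeometricBlocks.
Variables (R : realFieldType) (d : nat) (A : nat -> 'M[R]_d) (jump : pred nat).
Variables (a rho : R) (m : nat).
Hypotheses (rho_gt0 : 0 < rho) (rho_le_a : rho <= a) (m_gt0 : (0 < m)%N).
Hypothesis A_le : forall i, (0 < i)%N -> l1norm (A i) <= a.
Hypothesis jumpfree_block_le : forall s, njumps jump s (s + m) = 0%N ->
  l1norm (\prod_(s <= i < s + m) A i.+1) <= rho ^+ m.

Local Notation g := ((a / rho) ^+ m).

Let g_ge1 : 1 <= g.
Proof. by rewrite exprn_ege1 // ler_pdivlMr // mul1r. Qed.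

Let expr_aE L : a ^+ L = rho ^+ L * (a / rho) ^+ L.
Proof. by rewrite -exprMn mulrC divfK ?gt_eqF. Qed.

Let index_iota_le s L : forall i, i \in index_iota s (s + L) -> l1norm (A i.+1) <= a.
Proof. by move=> i _; apply: A_le. Qed.

Lemma l1norm_block_le s L :
  l1norm (\prod_(s <= i < s + L) A i.+1) <= d%:R * rho ^+ L * g ^+ (njumps jump s (s + L)).+1.
Proof.
have g_ge0 : 0 <= g := le_trans ler01 g_ge1.
have drho_ge0 L' : 0 <= d%:R * rho ^+ L' by rewrite mulr_ge0 ?ler0n ?exprn_ge0 ?ltW.
elim/ltn_ind: L s => L IH s.
have [L_lt_m | m_le_L] := ltnP L m.
  apply: le_trans (l1norm_prod_le (@index_iota_le s L)) _.
  rewrite size_iota addKn [a ^+ L]expr_aE mulrA; apply: ler_wpM2l; first exact: drho_ge0.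
  have aL_le_g : (a / rho) ^+ L <= g.
    by apply: ler_weXn2l (ltnW L_lt_m); rewrite ler_pdivlMr // mul1r.
  by apply: le_trans aL_le_g _; rewrite -[leLHS]expr1; apply: ler_weXn2l.
have [L' eqL] : exists L', L = (m + L')%N by exists (L - m)%N; rewrite subnKC.
subst L.
have lt_L' : (L' < m + L')%N by rewrite -{1}(add0n L') ltn_add2r.
have IHrest := IH L' lt_L' (s + m)%N.
set k := njumps jump (s + m) (s + m + L') in IHrest *.
rewrite addnA (big_cat_nat (leq_addr m s) (leq_addr L' _)) /=.
rewrite (@njumps_cat _ _ (s + m)) ?leq_addr //= -/k.
apply: le_trans (l1normM _ _) _.
have [jumpfree | jumpy] := eqVneq (njumps jump s (s + m)) 0%N.
  have first_le := jumpfree_block_le jumpfree.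
  apply: le_trans (ler_pM (l1norm_ge0 _) (l1norm_ge0 _) first_le IHrest) _.
  have -> : rho ^+ m * (d%:R * rho ^+ L' * g ^+ k.+1) = d%:R * rho ^+ (m + L') * g ^+ k.+1.
    by rewrite exprD; ring.
  by rewrite jumpfree add0n.
have first_le : l1norm (\prod_(s <= i < s + m) A i.+1) <= rho ^+ m * g.
  have iota_neq0 : index_iota s (s + m) != [::] by rewrite -size_eq0 size_iota addKn -lt0n.
  have := l1norm_nonempty_prod_le iota_neq0 (@index_iota_le s m).
  by rewrite size_iota addKn -expr_aE.
apply: le_trans (ler_pM (l1norm_ge0 _) (l1norm_ge0 _) first_le IHrest) _.
have -> : rho ^+ m * g * (d%:R * rho ^+ L' * g ^+ k.+1) = d%:R * rho ^+ (m + L') * g ^+ k.+2.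
  by rewrite exprD [g ^+ k.+2]exprS; ring.
apply: ler_wpM2l; first exact: drho_ge0.
by apply: ler_weXn2l; rewrite // ltnS -{1}(add0n k) ltn_add2r lt0n.
Qed.

End GeometricBlocks.

Lemma l1norm_sub_le_steps (R : numDomainType) m n (A : nat -> 'M[R]_(m, n)) s k e :
  (s <= k)%N -> (forall j, (s <= j < k)%N -> l1norm (A j.+1 - A j) <= e) ->
  l1norm (A k - A s) <= (k - s)%:R * e.
Proof.
move=> s_le_k steps_le; rewrite -(telescope_sumr _ s_le_k) mulr_natl -sumr_const_nat.
by apply: le_trans (l1norm_sum _ _ _) _; apply: ler_sum_nat.
Qed.

Lemma l1norm_block_sub_expr_le (R : numDomainType) d (A : nat -> 'M[R]_d) a e s m :
  1 <= a -> (forall i, (0 < i)%N -> l1norm (A i) <= a) ->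
  (forall k, (s <= k < s + m)%N -> l1norm (A k.+2 - A k.+1) <= e) ->
  l1norm (\prod_(s <= i < s + m) A i.+1 - A s.+1 ^+ m) <= m%:R * d%:R * a ^+ m * (m%:R * e).
Proof.
move=> a_ge1 A_le steps_le.
have -> : A s.+1 ^+ m = \prod_(s <= i < s + m) A s.+1 by rewrite prodr_const_nat addKn.
have := @l1norm_prod_sub_le _ _ _ (index_iota s (s + m)) (fun i => A i.+1) (fun=> A s.+1)
  a (m%:R * e) a_ge1.
rewrite size_iota addKn; apply=> i; rewrite mem_index_iota => /andP[s_le_i i_lt].
split; [exact: A_le | exact: A_le |].
have e_ge0 : 0 <= e.
  by apply: le_trans (l1norm_ge0 _) (steps_le s _); rewrite leqnn (leq_ltn_trans s_le_i).
apply: le_trans (l1norm_sub_le_steps (A := fun j => A j.+1) s_le_i _) _.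
  by move=> j /andP[s_le_j j_lt]; apply: steps_le; rewrite s_le_j (ltn_trans j_lt).
by rewrite ler_wpM2r // ler_nat leq_subLR ltnW.
Qed.

Lemma exists_expr_lt (R : realType) (x e : R) :
  0 <= x < 1 -> 0 < e -> exists m, (0 < m)%N /\ x ^+ m < e.
Proof.
case/andP=> x_ge0 x_lt1 e_gt0.
have x_norm_lt1 : `|x| < 1 by rewrite ger0_norm.
have [N _ N_lt] := cvgr_dist_lt _ _ (cvg_expr x_norm_lt1) e e_gt0.
exists N.+1; split => //.
by have := N_lt N.+1 (leqnSn N); rewrite /= sub0r normrN ger0_norm ?exprn_ge0.
Qed.

Lemma jumpfree_blocks_contract (R : realType) d (a r0 rho : R) :
  1 <= a -> 0 <= r0 -> r0 < rho ->
  exists m delta, [/\ (0 < m)%N, 0 < delta & forall (A : nat -> 'M[R]_d) s,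
    (forall i, (0 < i)%N -> l1norm (A i) <= a) -> spectral_radius (A s.+1) <= r0 ->
    (forall k, (s <= k < s + m)%N -> l1norm (A k.+2 - A k.+1) <= delta) ->
    l1norm (\prod_(s <= i < s + m) A i.+1) <= rho ^+ m].
Proof.
move=> a_ge1 r0_ge0 r0_lt_rho; have rho_gt0 : 0 < rho by lra.
pose r1 := (r0 + rho) / 2; have r0_lt_r1 : r0 < r1 by rewrite /r1; lra.
pose G := d%:R * pow_coef r0 r1 (a + r0 * d%:R) d.
have ratio_bounds : 0 <= r1 / rho < 1.
  by rewrite divr_ge0 ?ltr_pdivrMr ?mul1r /r1 /=; lra.
have eps_gt0 : 0 < (2 * (`|G| + 1))^-1 by rewrite invr_gt0; have := normr_ge0 G; lra.
have [m [m_gt0 small]] := exists_expr_lt ratio_bounds eps_gt0.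
have rho_m_gt0 : 0 < rho ^+ m by rewrite exprn_gt0.
have a_gt0 : 0 < a by lra.
pose delta := rho ^+ m / (2 * (m%:R ^+ 2 * d.+1%:R * a ^+ m)).
exists m, delta; split=> // [|A s A_le A_sr steps_le].
  by rewrite divr_gt0 // !mulr_gt0 ?exprn_gt0 ?ltr0n.
have power_le : G * r1 ^+ m <= rho ^+ m / 2.
  have r1E : r1 ^+ m = (r1 / rho) ^+ m * rho ^+ m by rewrite -exprMn divfK ?gt_eqF.
  have ratio_m_ge0 : 0 <= (r1 / rho) ^+ m by rewrite exprn_ge0 // divr_ge0; lra.
  have G1_gt0 : 0 < 2 * (`|G| + 1) by have := normr_ge0 G; lra.
  move: small; rewrite -[X in _ < X]div1r ltr_pdivlMr // => small.
  rewrite r1E mulrA [leRHS]mulrC; apply: ler_wpM2r; first exact: ltW.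
  have := ler_norm G; nra.
have perturbation_le : m%:R * d%:R * a ^+ m * (m%:R * delta) <= rho ^+ m / 2.
  have -> : m%:R * d%:R * a ^+ m * (m%:R * delta) = rho ^+ m / 2 * (d%:R / d.+1%:R).
    by rewrite /delta; field; rewrite !gt_eqF ?exprn_gt0 ?ltr0n //; have := ler0n R d; lra.
  apply: ler_piMr; first by rewrite divr_ge0 ?ltW.
  by rewrite ler_pdivrMr ?ltr0n // mul1r ler_nat.
rewrite -(subrK (A s.+1 ^+ m) (\prod_(s <= i < s + m) A i.+1)) addrC.
apply: le_trans (l1normD _ _) _; rewrite [leRHS](splitr (rho ^+ m)) lerD //.
  by apply: le_trans power_le; apply: l1norm_expr_le_spectral_radius; rewrite ?A_le.
by apply: le_trans perturbation_le; apply: l1norm_block_sub_expr_le.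
Qed.

Lemma pvar_partial_sum_le (R : realType) d (p Astar : R) (A : nat -> 'M[R]_d) :
  0 < p -> (pvar_norm p A <= Astar%:E)%E ->
  forall t, \sum_(0 <= k < t) powR (opnorm (A k.+2 - A k.+1)) p <= powR Astar p.
Proof.
move=> p_gt0 A_pvar t; set S := \sum_(0 <= k < t) _.
have S_ge0 : 0 <= S by apply: sumr_ge0 => k _; apply: powR_ge0.
move: A_pvar; rewrite /pvar_norm; set V := [set _ | _ in _] => A_pvar.
have V_succn : V (\sum_(0 <= k <oo) (powR (opnorm (A k.+2 - A k.+1)) p)%:E)%E.
  by exists succn.
have S_le_sup : (S%:E <= ereal_sup V)%E.
  apply: le_trans (ereal_sup_ubound V_succn).
  rewrite /S -sumEFin; apply: nneseries_lim_ge => k _ _.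
  by rewrite lee_fin powR_ge0.
have sup_ge0 : (0 <= ereal_sup V)%E by apply: le_trans S_le_sup; rewrite lee_fin.
have S_root_le : powR S p^-1 <= Astar.
  rewrite -lee_fin -poweR_EFin; apply: le_trans A_pvar.
  apply: gt0_ler_poweR S_le_sup; rewrite ?invr_ge0 ?ltW //.
    by rewrite in_itv /= lee_fin S_ge0 leey.
  by rewrite in_itv /= leey andbT.
have Astar_ge0 : 0 <= Astar := le_trans (powR_ge0 _ _) S_root_le.
have -> : S = powR (powR S p^-1) p by rewrite -powRrM mulVf ?gt_eqF // powRr1.
have p_ge0 : 0 <= p := ltW p_gt0.
by apply: ge0_ler_powR S_root_le; rewrite ?nnegrE ?powR_ge0.
Qed.

Definition opnorm_jump (R : realType) d (A : nat -> 'M[R]_d) (delta : R) : pred nat :=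
  fun k => delta < opnorm (A k.+2 - A k.+1).

Lemma njumps_le_pvar (R : realType) d (p Astar delta : R) :
  0 < p -> 0 < delta -> exists M : nat, forall A : nat -> 'M[R]_d,
    (pvar_norm p A <= Astar%:E)%E -> forall s t, (s <= t)%N ->
    (njumps (opnorm_jump A delta) s t <= M)%N.
Proof.
move=> p_gt0 delta_gt0; have eta_gt0 : 0 < powR delta p by rewrite powR_gt0.
have [p_ge0 delta_ge0] := (ltW p_gt0, ltW delta_gt0).
exists (Num.Def.archi_bound (powR Astar p / powR delta p)) => A A_pvar s t s_le_t.
have njumps_le : (njumps (opnorm_jump A delta) 0 t)%:R * powR delta p <= powR Astar p.
  apply: le_trans (pvar_partial_sum_le p_gt0 A_pvar t).
  rewrite /njumps natr_sum mulr_suml; apply: ler_sum_nat => k _.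
  case: (boolP (opnorm_jump A delta k)) => [jump_k | _]; last by rewrite mul0r powR_ge0.
  by rewrite mul1r; apply: ge0_ler_powR (ltW jump_k); rewrite ?nnegrE ?opnorm_ge0.
rewrite -ler_pdivlMr // in njumps_le.
have n_lt := le_lt_trans njumps_le (archi_boundP (le_trans (ler0n _ _) njumps_le)).
rewrite ltr_nat in n_lt; apply: leq_trans (ltnW n_lt).
by rewrite (@njumps_cat _ 0 s t) ?leq_addl //= s_le_t.
Qed.

Lemma opnorm_prod_le_geometric (R : realType) d (a r0 rho : R) :
  1 <= a -> 0 <= r0 -> r0 < rho -> rho <= a ->
  exists2 delta : R, 0 < delta & forall M : nat, exists K : R,
    forall A : nat -> 'M[R]_d,
    (forall i, (0 < i)%N -> opnorm (A i) <= a) ->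
    (forall i, (0 < i)%N -> spectral_radius (A i) <= r0) ->
    forall s t, (s <= t)%N -> (njumps (opnorm_jump A delta) s t <= M)%N ->
    opnorm (\prod_(s <= i < t) A i.+1) <= K * rho ^+ (t - s).
Proof.
move=> a_ge1 r0_ge0 r0_lt_rho rho_le_a.
have rho_gt0 : 0 < rho by lra.
have a_ge0 : 0 <= a by lra.
pose D : R := (d * d).+1%:R; have D_gt0 : 0 < D by rewrite ltr0n.
have Da_ge1 : 1 <= D * a by rewrite mulr_ege1 // ler1n.
have [m [delta [m_gt0 delta_gt0 contract]]] :=
  jumpfree_blocks_contract d Da_ge1 r0_ge0 r0_lt_rho.
exists (delta / D) => [|M]; first by rewrite divr_gt0.
exists (d%:R * ((D * a / rho) ^+ m) ^+ M.+1) => A A_le A_sr s t s_le_t few_jumps.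
have l1norm_le_D_opnorm (B : 'M[R]_d) : l1norm B <= D * opnorm B.
  by apply: le_trans (l1norm_le_opnorm B) _; rewrite ler_wpM2r ?opnorm_ge0 // ler_nat.
have A_l1 i : (0 < i)%N -> l1norm (A i) <= D * a.
  by move=> i_gt0; apply: le_trans (l1norm_le_D_opnorm _) _; rewrite ler_wpM2l ?A_le // ltW.
have rho_le_Da : rho <= D * a by apply: le_trans rho_le_a _; rewrite ler_peMl // ler1n.
have jumpfree_le s' : njumps (opnorm_jump A (delta / D)) s' (s' + m) = 0%N ->
    l1norm (\prod_(s' <= i < s' + m) A i.+1) <= rho ^+ m.
  move=> no_jump; apply: contract => //; first exact: A_sr.
  move=> k /(njumps_eq0 no_jump); rewrite -leNgt => small.
  by apply: le_trans (l1norm_le_D_opnorm _) _; rewrite -ler_pdivlMl // mulrC.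
have := l1norm_block_le rho_gt0 rho_le_Da m_gt0 A_l1 jumpfree_le s (t - s).
rewrite subnKC // => /(le_trans (opnorm_le_l1norm _)) /le_trans; apply.
rewrite mulrAC; apply: ler_wpM2r; first by rewrite exprn_ge0 // ltW.
apply: ler_wpM2l; first exact: ler0n.
apply: ler_weXn2l; last by rewrite ltnS.
by rewrite exprn_ege1 // ler_pdivlMr // mul1r.
Qed.

Theorem lemmaC8 (R : realType) (d : nat) (p Astar rho0 rho : R) :
  1 <= p -> rho0 < 1 -> rho0 < rho ->
  exists K : R,
    forall A : nat -> 'M[R]_d,
      (forall i : nat, (0 < i)%N -> opnorm (A i) <= Astar) ->
      sup [set spectral_radius (A i) | i in [set i : nat | (0 < i)%N]] = rho0 ->
      (pvar_norm p A <= Astar%:E)%E ->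
      forall s t : nat, (s < t)%N ->
        opnorm (\prod_(s <= i < t) A i.+1) <= K * rho ^+ (t - s).
Proof.
move=> p_ge1 _ rho0_lt_rho; have p_gt0 : 0 < p by lra.
have [rho_le0 | rho_gt0] := lerP rho 0.
  exists 0 => A A_le A_sr _; exfalso.
  have := spectral_radius_le_sup A_le (ltn0Sn 0); rewrite A_sr.
  by have := spectral_radius_ge0 (A 1%N); lra.
pose r0 := Num.max rho0 0; pose a := Num.max (Num.max Astar 1) rho.
have a_ge1 : 1 <= a by rewrite !le_max lexx !orbT.
have r0_ge0 : 0 <= r0 by rewrite le_max lexx orbT.
have r0_lt_rho : r0 < rho by rewrite gt_max rho0_lt_rho rho_gt0.
have rho_le_a : rho <= a by rewrite le_max lexx orbT.
have [delta delta_gt0 decay] := opnorm_prod_le_geometric d a_ge1 r0_ge0 r0_lt_rho rho_le_a.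
have [M few_jumps] := njumps_le_pvar d Astar p_gt0 delta_gt0.
have [K K_decay] := decay M.
exists K => A A_le A_sr A_pvar s t s_lt_t.
apply: K_decay (ltnW s_lt_t) (few_jumps A A_pvar s t (ltnW s_lt_t)) => i i_gt0.
  by apply: le_trans (A_le i i_gt0) _; rewrite !le_max lexx.
by rewrite (le_trans (spectral_radius_le_sup A_le i_gt0)) // A_sr le_max lexx.
Qed.
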